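(* Consider a pairing heap built by an arbitrary sequence of the operations make-heap, insert, get-min, decrease-key and delete-min, starting from an empty heap, and let $n$ be its current number of elements and $N$ its current sticky size. Then the potential $\Phi$ of the heap is $O(N) = O(n)$, with the hidden constant independent of the heap and of the operation history.
   Context: A pairing heap is a heap-ordered rooted ordered tree (the ''general view''): each node stores a key, has zero or more children ordered from left to right, and every child has a strictly larger key than its parent. It is stored in the ''binary view'' via the leftmost-child/right-sibling correspondence: the left child of $x$ in the binary view is the leftmost child of $x$ in the general view, and the right child of $x$ in the binary view is the next sibling to the right of $x$ in the general view. Pairing two heap-ordered trees makes the root with the larger key the leftmost child of the other root. Operations: make-heap returns an empty heap; get-min returns the root key; insert creates a new node, which becomes the root if the heap is empty and otherwise is paired with the root; decrease-key$(p,y)$ (with $y$ strictly less than the current key of the node $p$) sets the key to $y$ and, if the node is not the root, detaches it (with its general-view subtree) from its parent and pairs it with the root; delete-min removes the root, then (first pass) pairs the root's former children in consecutive pairs from left to right, then (second pass) repeatedly pairs the two rightmost remaining trees until one tree remains. Sticky size: $N$ is initially $1$; after every heap operation, if $n \ge 2N$ then $N$ is doubled, and if $n \le N/2$ then $N$ is halved, where $n$ is the current number of elements. Let $\lg = \log_2$. For a node $x$, $|x|$ is the number of nodes in the subtree rooted at $x$ in the binary view, and $x_L$, $x_R$ are its left and right children in the binary view (a missing child has size $0$), so $|x| = |x_L|+|x_R|+1$. Node potential $\phi_x$: if $|x_L| > \lg N$ and $|x_R| > \lg N$, $x$ is large and $\phi_x = 400 + 100\lg|x|$; if $|x_L| \le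 \lg N < |x_R|$, $x$ is mixed and $\phi_x = 400 + 100\frac{|x_L|}{\lg N}\lg|x|$ (symmetrically, if $|x_R| \le \lg N < |x_L|$, $x$ is mixed and $\phi_x = 400 + 100\frac{|x_R|}{\lg N}\lg|x|$); if $|x_L|\le \lg N$ and $|x_R| \le \lg N$, $x$ is small and $\phi_x = 0$. Edge potential: an edge of the binary view joining a large node to its right child (in the binary view) that is also large has potential $-7$; all other edges have potential $0$. The potential of the heap is $\Phi = 900|N-n| + \sum_x \phi_x + (\text{sum of edge potentials})$. *)

From Stdlib Require Import Reals List Arith Bool.
Import ListNotations.
Open Scope R_scope.
Local Open Scope bool_scope.

(** General view: a node has an identity (used by decrease-key), a key and
    an ordered list of children (leftmost first). *)
Inductive tree : Type := Node (id : nat) (k : R) (cs : list tree).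

Definition tid (t : tree) : nat := match t with Node i _ _ => i end.
Definition tkey (t : tree) : R := match t with Node _ k _ => k end.

Definition link (a b : tree) : tree :=
  match a, b with
  | Node i ka ca, Node j kb cb =>
      if Rlt_dec kb ka then Node j kb (a :: cb) else Node i ka (b :: ca)
  end.

(** Binary view (leftmost-child / right-sibling). *)
Inductive btree : Type := BLeaf | BNode (l r : btree).

Fixpoint bin_node (t : tree) (right : btree) : btree :=
  match t with
  | Node _ _ cs =>
      BNode ((fix go (l : list tree) : btree :=
                match l with
                | [] => BLeaf
                | c :: rest => bin_node c (go rest)
                end) cs) right
  end.

Fixpoint bin_forest (ts : list tree) : btree :=
  match ts with
  | [] => BLeaf
  | t :: rest => bin_node t (bin_forest rest)
  end.

Definition bin_heap (h : option tree) : btree :=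
  match h with None => BLeaf | Some t => bin_forest [t] end.

Fixpoint bsize (b : btree) : nat :=
  match b with BLeaf => 0%nat | BNode l r => S (bsize l + bsize r) end.

Definition hsize (h : option tree) : nat := bsize (bin_heap h).

Fixpoint find (p : nat) (t : tree) : option tree :=
  match t with
  | Node i k cs =>
      if Nat.eqb i p then Some t else
      (fix go (l : list tree) : option tree :=
         match l with
         | [] => None
         | c :: r => match find p c with Some s => Some s | None => go r end
         end) cs
  end.

Fixpoint cut (p : nat) (t : tree) : tree :=
  match t with
  | Node i k cs =>
      Node i k ((fix go (l : list tree) : list tree :=
                   match l with
                   | [] => []
                   | c :: r => if Nat.eqb (tid c) p then go r else cut p c :: go r
                   end) cs)
  end.

Definition insert (c : nat) (x : R) (h : option tree) : option tree :=
  match h with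
  | None => Some (Node c x [])
  | Some r => Some (link r (Node c x []))
  end.

(** decrease-key(p, y); None when the operation is not applicable
    (p not in the heap, or y not strictly less than the key of p). *)
Definition decrease_key (p : nat) (y : R) (h : option tree) : option (option tree) :=
  match h with
  | None => None
  | Some (Node i k cs as r) =>
      if Nat.eqb i p then
        (if Rlt_dec y k then Some (Some (Node i y cs)) else None)
      else match find p r with
           | Some (Node j kp cp) =>
               if Rlt_dec y kp then Some (Some (link (cut p r) (Node j y cp)))
               else None
           | None => None
           end
  end.

Fixpoint pass1 (l : list tree) : list tree :=
  match l with
  | a :: b :: r => link a b :: pass1 r
  | _ => l
  end.

Fixpoint pass2 (l : list tree) : option tree :=
  match l with
  | [] => None
  | a :: r => match pass2 r with None => Some a | Some b => Some (link a b) end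
  end.

Definition delete_min (r : tree) : option tree :=
  match r with Node _ _ cs => pass2 (pass1 cs) end.

(** Sticky size update after an operation, n = current number of elements.
    N is always a power of two and is never halved below 1. *)
Definition sticky_update (n N : nat) : nat :=
  if Nat.leb (2 * N) n then (2 * N)%nat
  else if Nat.leb (2 * n) N && Nat.leb 2 N then Nat.div2 N
  else N.

(** States reachable by operation histories: (heap, N, next fresh id). *)
Inductive reachable : option tree -> nat -> nat -> Prop :=
| R_make_heap : reachable None (sticky_update 0 1) 0
| R_get_min : forall h N c, reachable h N c ->
    reachable h (sticky_update (hsize h) N) c
| R_insert : forall h N c x, reachable h N c ->
    reachable (insert c x h) (sticky_update (hsize (insert c x h)) N) (S c)
| R_decrease_key : forall h N c p y h', reachable h N c ->
    decrease_key p y h = Some h' ->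
    reachable h' (sticky_update (hsize h') N) c
| R_delete_min : forall r N c, reachable (Some r) N c ->
    reachable (delete_min r) (sticky_update (hsize (delete_min r)) N) c.

Definition lg (x : R) : R := ln x / ln 2.

Definition node_pot (N : nat) (l r : btree) : R :=
  let g := lg (INR N) in
  let sl := INR (bsize l) in
  let sr := INR (bsize r) in
  let s := INR (S (bsize l + bsize r)) in
  if Rlt_dec g sl then
    (if Rlt_dec g sr then 400 + 100 * lg s
     else 400 + 100 * (sr / g) * lg s)
  else
    (if Rlt_dec g sr then 400 + 100 * (sl / g) * lg s
     else 0).

Definition is_large (N : nat) (b : btree) : bool :=
  match b with
  | BLeaf => false
  | BNode l r =>
      let g := lg (INR N) in
      if Rlt_dec g (INR (bsize l)) then
        (if Rlt_dec g (INR (bsize r)) then true else false)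
      else false
  end.

Fixpoint tree_pot (N : nat) (b : btree) : R :=
  match b with
  | BLeaf => 0
  | BNode l r =>
      node_pot N l r + tree_pot N l + tree_pot N r
      + (if is_large N b && is_large N r then -7 else 0)
  end.

Definition Phi (N : nat) (h : option tree) : R :=
  900 * Rabs (INR N - INR (hsize h)) + tree_pot N (bin_heap h).

(** The sticky size keeps [n < 2 N] and [N <= 2 n + 2]: every operation
    changes [n] by at most one, and [N] is doubled or halved as soon as one
    of these inequalities is about to fail.  So [900 |N - n|] is [O(N)], and
    it remains to bound the tree potential by [400 n].  With
    [m x = min x (lg N)], induction on the binary view shows that a subtree
    of size [s] has potential at most [400 s - 200 m s]: a large node pays
    [400 + 100 lg s <= 400 + 200 lg N] (as [s <= 2 N]), paid for by the
    slack [200 lg N] of one of its two large children, and a mixed node pays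
    [400 + 100 (b / lg N) lg s <= 400 + 200 b], paid for by the slack [200 b]
    of its child of size [b <= lg N].  Edge potentials are nonpositive.
    To control [n] we track the identities of the nodes: they stay distinct,
    and each operation permutes them, up to the inserted or deleted one. *)

From Pilot Require Import Defs.
From Stdlib Require Import Reals.
Open Scope R_scope.
From Stdlib Require Import List Lia Lra Permutation.
Import ListNotations.

Fixpoint tree_nested_ind (P : tree -> Prop)
  (H : forall i k cs, Forall P cs -> P (Node i k cs)) (t : tree) : P t :=
  match t with
  | Node i k cs => H i k cs
      ((fix go (l : list tree) : Forall P l :=
          match l with
          | [] => Forall_nil P
          | c :: r => Forall_cons c (tree_nested_ind P H c) (go r)
          end) cs)
  end.

Fixpoint forest_find (p : nat) (l : list tree) : option tree :=
  match l with
  | [] => None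
  | c :: r => match Defs.find p c with Some s => Some s | None => forest_find p r end
  end.

Fixpoint forest_cut (p : nat) (l : list tree) : list tree :=
  match l with
  | [] => []
  | c :: r => if Nat.eqb (tid c) p then forest_cut p r else cut p c :: forest_cut p r
  end.

Fixpoint tree_ids (t : tree) : list nat :=
  match t with
  | Node i _ cs => i :: (fix go (l : list tree) : list nat :=
                          match l with [] => [] | c :: r => tree_ids c ++ go r end) cs
  end.

Fixpoint forest_ids (l : list tree) : list nat :=
  match l with [] => [] | c :: r => tree_ids c ++ forest_ids r end.

Definition heap_ids (h : option tree) : list nat :=
  match h with None => [] | Some t => tree_ids t end.

Lemma find_Node p i k cs :
  Defs.find p (Node i k cs) = if Nat.eqb i p then Some (Node i k cs) else forest_find p cs.
Proof.
  simpl; destruct (i =? p)%nat; [reflexivity|].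
  induction cs as [|c r IH]; simpl; [reflexivity|]. now rewrite IH.
Qed.

Lemma cut_Node p i k cs : cut p (Node i k cs) = Node i k (forest_cut p cs).
Proof.
  simpl; f_equal. induction cs as [|c r IH]; simpl; [reflexivity|]. now rewrite IH.
Qed.

Lemma tree_ids_Node i k cs : tree_ids (Node i k cs) = i :: forest_ids cs.
Proof. reflexivity. Qed.


Lemma bsize_bin_node t r : bsize (bin_node t r) = (length (tree_ids t) + bsize r)%nat.
Proof.
  revert r; induction t as [i k cs Hcs] using tree_nested_ind; intros r.
  change (S (bsize (bin_forest cs) + bsize r) = S (length (forest_ids cs)) + bsize r)%nat.
  enough (bsize (bin_forest cs) = length (forest_ids cs)) by lia.
  induction Hcs as [|c l Hc _ IH]; simpl; [reflexivity|].
  now rewrite Hc, IH, length_app.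
Qed.

Lemma hsize_heap_ids h : hsize h = length (heap_ids h).
Proof.
  destruct h as [t|]; [|reflexivity].
  unfold hsize, bin_heap, bin_forest; rewrite bsize_bin_node; simpl; lia.
Qed.

Lemma tree_ids_link a b : Permutation (tree_ids (link a b)) (tree_ids a ++ tree_ids b).
Proof.
  destruct a as [i ka ca], b as [j kb cb]; unfold link.
  destruct (Rlt_dec kb ka).
  - exact (Permutation_middle (tree_ids (Node i ka ca)) (forest_ids cb) j).
  - change (Permutation (i :: tree_ids (Node j kb cb) ++ forest_ids ca)
              ((i :: forest_ids ca) ++ tree_ids (Node j kb cb))).
    apply perm_skip, Permutation_app_comm.
Qed.

Lemma forest_ids_pass1 l : Permutation (forest_ids (pass1 l)) (forest_ids l).
Proof.
  enough (H : Permutation (forest_ids (pass1 l)) (forest_ids l) /\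
              forall a, Permutation (forest_ids (pass1 (a :: l))) (forest_ids (a :: l)))
    by apply H.
  induction l as [|b r [IH1 IH2]]; split; try easy.
  intros a; simpl; rewrite app_assoc.
  apply Permutation_app; [apply tree_ids_link|exact IH1].
Qed.

Lemma heap_ids_pass2 l : Permutation (heap_ids (pass2 l)) (forest_ids l).
Proof.
  induction l as [|a r IH]; simpl; [reflexivity|].
  destruct (pass2 r) as [b|]; simpl in *.
  - rewrite tree_ids_link; now apply Permutation_app_head.
  - apply Permutation_nil in IH; now rewrite IH, app_nil_r.
Qed.

Lemma heap_ids_delete_min i k cs :
  Permutation (heap_ids (delete_min (Node i k cs))) (forest_ids cs).
Proof. simpl delete_min; rewrite heap_ids_pass2; apply forest_ids_pass1. Qed.

Lemma NoDup_app_notin (a b : list nat) x : NoDup (a ++ b) -> In x a -> ~ In x b.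
Proof.
  intros Hnd Ha Hb; apply in_split in Ha as (a1 & a2 & ->).
  rewrite <- app_assoc in Hnd; apply (NoDup_remove_2 _ _ _ Hnd).
  apply in_or_app; right; apply in_or_app; now right.
Qed.

Section FindCut.
Variable p : nat.

Lemma find_None_notin t : Defs.find p t = None -> ~ In p (tree_ids t).
Proof.
  induction t as [i k cs Hcs] using tree_nested_ind.
  rewrite find_Node, tree_ids_Node.
  destruct (Nat.eqb_spec i p) as [E|E]; [discriminate|]; intros Hf [Hi|Hin]; [congruence|].
  induction Hcs as [|c l Hc _ IH]; simpl in *; [contradiction|].
  destruct (Defs.find p c); [discriminate|].
  apply in_app_or in Hin as [Hin|Hin]; [exact (Hc eq_refl Hin)|exact (IH Hf Hin)].
Qed.

Lemma find_Some_tid t s : Defs.find p t = Some s -> tid s = p.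
Proof.
  revert s; induction t as [i k cs Hcs] using tree_nested_ind; intros s.
  rewrite find_Node.
  destruct (Nat.eqb_spec i p) as [E|_]; [now intros [= <-]|].
  induction Hcs as [|c l Hc _ IH]; simpl; [discriminate|].
  destruct (Defs.find p c) eqn:F; [intros [= <-]; now apply Hc|exact IH].
Qed.

Lemma cut_notin t : ~ In p (tree_ids t) -> cut p t = t.
Proof.
  induction t as [i k cs Hcs] using tree_nested_ind; intros Hn.
  rewrite cut_Node; f_equal.
  rewrite tree_ids_Node in Hn; apply not_in_cons in Hn as [_ Hn].
  induction Hcs as [|[j kc cc] l Hc _ IH]; cbn [forest_cut tid]; [reflexivity|].
  cbn [forest_ids] in Hn; rewrite in_app_iff, tree_ids_Node in Hn.
  destruct (Nat.eqb_spec j p) as [<-|_]; [exfalso; apply Hn; left; now left|].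
  rewrite Hc, IH; tauto.
Qed.

Lemma forest_cut_notin l : ~ In p (forest_ids l) -> forest_cut p l = l.
Proof.
  induction l as [|c l IH]; simpl; [reflexivity|]; rewrite in_app_iff; intros Hn.
  destruct (Nat.eqb_spec (tid c) p) as [E|_].
  - exfalso; apply Hn; left; destruct c; now left.
  - rewrite cut_notin, IH; tauto.
Qed.

(** Distinct identities guarantee that [cut] removes no subtree other than
    the one returned by [find]. *)
Lemma tree_ids_cut_find t s : NoDup (tree_ids t) -> tid t <> p ->
  Defs.find p t = Some s ->
  Permutation (tree_ids t) (tree_ids (cut p t) ++ tree_ids s).
Proof.
  revert s; induction t as [i k cs Hcs] using tree_nested_ind; intros s Hnd Hti.
  rewrite find_Node, cut_Node, !tree_ids_Node.
  simpl in Hti; apply Nat.eqb_neq in Hti as ->; intros Hf; simpl; apply perm_skip.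
  apply NoDup_cons_iff in Hnd as [_ Hnd]; revert Hnd Hf.
  induction Hcs as [|c l Hc _ IH]; simpl; intros Hnd Hf; [discriminate|].
  destruct (Defs.find p c) as [s'|] eqn:F.
  - injection Hf as <-.
    assert (Hps : In p (tree_ids s')) by (destruct s'; left; exact (find_Some_tid _ _ F)).
    destruct (Nat.eqb_spec (tid c) p) as [E|E].
    + destruct c as [j kc cc]; simpl in E; subst j.
      rewrite find_Node, Nat.eqb_refl in F; injection F as <-.
      rewrite forest_cut_notin by exact (NoDup_app_notin _ _ _ Hnd Hps).
      apply Permutation_app_comm.
    + pose proof (Hc _ (NoDup_app_remove_r _ _ Hnd) E eq_refl) as Hp.
      rewrite forest_cut_notin.
      * simpl; rewrite Hp at 1; rewrite <- !app_assoc.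
        apply Permutation_app_head, Permutation_app_comm.
      * apply (NoDup_app_notin _ _ _ Hnd), (Permutation_in _ (Permutation_sym Hp)).
        apply in_or_app; now right.
  - pose proof (find_None_notin _ F) as Hn.
    destruct (Nat.eqb_spec (tid c) p) as [E|E].
    + exfalso; apply Hn; destruct c; now left.
    + rewrite cut_notin by exact Hn; simpl; rewrite <- app_assoc.
      exact (Permutation_app_head _ (IH (NoDup_app_remove_l _ _ Hnd) Hf)).
Qed.

End FindCut.

Lemma heap_ids_decrease_key p y h h' : NoDup (heap_ids h) ->
  decrease_key p y h = Some h' -> Permutation (heap_ids h') (heap_ids h).
Proof.
  destruct h as [[i k cs]|]; intros Hnd; [unfold decrease_key|discriminate].
  destruct (Nat.eqb_spec i p) as [E|E].
  - destruct (Rlt_dec y k); [now intros [= <-]|discriminate].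
  - destruct (Defs.find p (Node i k cs)) as [[j kp cp]|] eqn:F; [|discriminate].
    destruct (Rlt_dec y kp); [intros [= <-]|discriminate].
    change (Permutation (tree_ids (link (cut p (Node i k cs)) (Node j y cp)))
                        (tree_ids (Node i k cs))).
    rewrite tree_ids_link, (tree_ids_cut_find p _ _ Hnd E F).
    reflexivity.
Qed.


Definition sticky_inv (n N : nat) : Prop := (1 <= N /\ n < 2 * N /\ N <= 2 * n + 2)%nat.

Lemma sticky_inv_update n0 n N : sticky_inv n0 N ->
  (n <= n0 + 1)%nat -> (n0 <= n + 1)%nat -> sticky_inv n (sticky_update n N).
Proof.
  unfold sticky_inv, sticky_update; intros (H1 & H2 & H3) H4 H5.
  destruct (Nat.leb_spec (2 * N) n); [lia|].
  destruct (Nat.leb_spec (2 * n) N), (Nat.leb_spec 2 N); simpl; try lia.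
  pose proof (Nat.div2_odd N) as D; destruct (Nat.odd N); simpl in D; lia.
Qed.

Definition reach_inv (h : option tree) (N c : nat) : Prop :=
  NoDup (heap_ids h) /\ (forall x, In x (heap_ids h) -> (x < c)%nat) /\
  sticky_inv (length (heap_ids h)) N.

Lemma reach_inv_perm h N c h' c' ids : reach_inv h N c ->
  Permutation (heap_ids h') ids -> NoDup ids -> (forall x, In x ids -> (x < c')%nat) ->
  (length ids <= length (heap_ids h) + 1)%nat -> (length (heap_ids h) <= length ids + 1)%nat ->
  reach_inv h' (sticky_update (hsize h') N) c'.
Proof.
  intros (_ & _ & Hs) P Hnd Hlt H1 H2; rewrite hsize_heap_ids.
  split; [exact (Permutation_NoDup (Permutation_sym P) Hnd)|split].
  - intros x Hx; apply Hlt, (Permutation_in _ P Hx).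
  - rewrite (Permutation_length P); exact (sticky_inv_update _ _ _ Hs H1 H2).
Qed.

Lemma reachable_inv h N c : reachable h N c -> reach_inv h N c.
Proof.
  induction 1 as [|h N c _ IH|h N c x _ IH|h N c p y h' _ IH D|[i k cs] N c _ IH].
  - split; [constructor|split; [intros x []|cbv; lia]].
  - apply (reach_inv_perm h N c h c (heap_ids h)); try apply IH; easy || lia.
  - pose proof IH as (Hnd & Hlt & _).
    apply (reach_inv_perm h N c _ _ (heap_ids h ++ [c]) IH).
    + destruct h as [t|]; simpl; [apply tree_ids_link|reflexivity].
    + apply NoDup_app; [exact Hnd|repeat constructor; easy|].
      intros a Ha [<-|[]]; specialize (Hlt _ Ha); lia.
    + intros z Hz; apply in_app_or in Hz as [Hz|[<-|[]]]; [specialize (Hlt _ Hz)|]; lia.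
    + rewrite length_app; simpl; lia.
    + rewrite length_app; simpl; lia.
  - pose proof IH as (Hnd & Hlt & _).
    apply (reach_inv_perm _ _ _ _ _ _ IH (heap_ids_decrease_key _ _ _ _ Hnd D) Hnd Hlt);
      lia.
  - pose proof IH as (Hnd & Hlt & _); cbn [heap_ids] in *; rewrite tree_ids_Node in *.
    apply NoDup_cons_iff in Hnd as [_ Hnd].
    apply (reach_inv_perm _ _ _ _ _ _ IH (heap_ids_delete_min i k cs) Hnd);
      [intros z Hz; apply Hlt; now right|cbn [heap_ids]; rewrite tree_ids_Node; simpl; lia..].
Qed.


Lemma ln2_pos : 0 < ln 2.
Proof. pose proof ln_lt_2; lra. Qed.

Lemma lg_le x y : 0 < x -> x <= y -> lg x <= lg y.
Proof.
  intros Hx [Hxy|<-]; [|lra]. unfold lg, Rdiv.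
  apply Rmult_le_compat_r; [left; apply Rinv_0_lt_compat, ln2_pos|].
  left; now apply ln_increasing.
Qed.

Lemma lg_1 : lg 1 = 0.
Proof. unfold lg; rewrite ln_1; unfold Rdiv; ring. Qed.

Lemma lg_double x : 0 < x -> lg (2 * x) = 1 + lg x.
Proof. intros; unfold lg; rewrite ln_mult by lra; field; pose proof ln2_pos; lra. Qed.

Lemma lg_INR_ge0 N : (1 <= N)%nat -> 0 <= lg (INR N).
Proof. intros; rewrite <- lg_1; apply lg_le; [lra|apply (le_INR 1); auto]. Qed.

Lemma lg_INR_le_double N s : (1 <= s)%nat -> (s <= 2 * N)%nat -> (2 <= N)%nat ->
  lg (INR s) <= 2 * lg (INR N).
Proof.
  intros Hs HsN HN.
  assert (Hg1 : 1 <= lg (INR N)).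
  { rewrite <- (Rplus_0_r 1), <- lg_1, <- lg_double by lra.
    apply lg_le; [lra|]; replace (2 * 1) with (INR 2) by (simpl; lra).
    now apply le_INR. }
  assert (Hs' : lg (INR s) <= lg (2 * INR N)).
  { apply lg_le; [apply lt_0_INR; lia|].
    rewrite <- (mult_INR 2); apply le_INR; exact HsN. }
  rewrite lg_double in Hs' by (apply lt_0_INR; lia); lra.
Qed.

Lemma node_pot_le N l r : (1 <= N)%nat -> (bsize l + bsize r < 2 * N)%nat ->
  let m x := Rmin x (lg (INR N)) in
  node_pot N l r <= 400 + 200 * (m (INR (bsize l)) + m (INR (bsize r))
                                  - m (INR (S (bsize l + bsize r)))).
Proof.
  intros HN Hs m; unfold m, node_pot.
  set (g := lg (INR N)); set (sl := INR (bsize l)); set (sr := INR (bsize r)).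
  assert (Hsum : INR (S (bsize l + bsize r)) = sl + sr + 1)
    by (rewrite S_INR, plus_INR; reflexivity).
  rewrite Hsum.
  assert (Hlg : (2 <= N)%nat -> lg (sl + sr + 1) <= 2 * g)
    by (rewrite <- Hsum; apply lg_INR_le_double; lia).
  assert (Hg2 : 0 < g -> (2 <= N)%nat).
  { intros Hg; destruct (Nat.eq_dec N 1) as [->|]; [|lia].
    unfold g in Hg; simpl in Hg; rewrite lg_1 in Hg; lra. }
  pose proof (lg_INR_ge0 N HN) as Hg0; fold g in Hg0.
  pose proof (pos_INR (bsize l)) as Hsl; pose proof (pos_INR (bsize r)) as Hsr.
  fold sl in Hsl; fold sr in Hsr.
  assert (Hmixed : forall b, 0 <= b <= g -> 100 * (b / g) * lg (sl + sr + 1) <= 200 * b).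
  { intros b [[Hb|<-] Hbg]; [|unfold Rdiv; lra].
    apply Rle_trans with (100 * (b / g) * (2 * g)); [|right; field; lra].
    apply Rmult_le_compat_l; [|apply Hlg, Hg2; lra].
    apply Rmult_le_pos; [lra|apply Rlt_le, Rdiv_lt_0_compat; lra]. }
  destruct (Rlt_dec g sl), (Rlt_dec g sr).
  - assert (Hsizes : (0 < bsize l /\ 0 < bsize r)%nat) by (split; apply INR_lt; simpl; fold sl sr; lra).
    rewrite !Rmin_right by lra; pose proof (Hlg ltac:(lia)); lra.
  - rewrite Rmin_right, Rmin_left, Rmin_right by lra; pose proof (Hmixed sr ltac:(lra)); lra.
  - rewrite Rmin_left, Rmin_right, Rmin_right by lra; pose proof (Hmixed sl ltac:(lra)); lra.
  - rewrite !Rmin_left by lra; pose proof (Rmin_l (sl + sr + 1) g); lra.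
Qed.

Lemma tree_pot_le N b : (1 <= N)%nat -> (bsize b < 2 * N)%nat ->
  tree_pot N b <= 400 * INR (bsize b) - 200 * Rmin (INR (bsize b)) (lg (INR N)).
Proof.
  intros HN; induction b as [|l IHl r IHr]; intros Hs.
  - simpl; rewrite Rmin_left by (apply lg_INR_ge0; exact HN); lra.
  - simpl bsize in Hs; pose proof (node_pot_le N l r HN ltac:(lia)) as Hnode.
    cbv zeta beta in Hnode.
    assert (Hedge : (if andb (is_large N (BNode l r)) (is_large N r) then -7 else 0) <= 0)
      by (destruct (andb _ _); lra).
    specialize (IHl ltac:(lia)); specialize (IHr ltac:(lia)).
    cbn [tree_pot bsize]; rewrite S_INR, plus_INR in *; lra.
Qed.

Theorem lemma1 : exists C : R, forall (h : option tree) (N c : nat),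
  reachable h N c ->
  Phi N h <= C * INR N /\ Phi N h <= C * (INR (hsize h) + 1).
Proof.
  exists 4000; intros h N c Hreach.
  destruct (reachable_inv _ _ _ Hreach) as (_ & _ & HN & Hlt & Hle).
  rewrite <- hsize_heap_ids in Hlt, Hle.
  pose proof (tree_pot_le N (bin_heap h) HN Hlt) as Hpot; fold (hsize h) in Hpot.
  assert (0 <= Rmin (INR (hsize h)) (lg (INR N)))
    by (apply Rmin_glb; [apply pos_INR|apply lg_INR_ge0, HN]).
  apply lt_INR in Hlt; apply le_INR in Hle.
  rewrite mult_INR in Hlt; rewrite plus_INR, mult_INR in Hle; simpl INR in Hlt, Hle.
  pose proof (pos_INR (hsize h)); pose proof (pos_INR N).
  assert (Rabs (INR N - INR (hsize h)) <= INR N + INR (hsize h))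
    by (unfold Rabs; destruct (Rcase_abs _); lra).
  unfold Phi; fold (hsize h); split; lra.
Qed.
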